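(* Let $\{z_n\}_{n\ge 0}$ be a sequence of positive real numbers satisfying $$(\alpha_1n+\alpha_0)z_{n+1}=(\beta_1n+\beta_0)z_n-(\gamma_1n+\gamma_0)z_{n-1}\quad (n\ge 1),$$ where $\alpha_1n+\alpha_0$, $\beta_1n+\beta_0$, $\gamma_1n+\gamma_0$ are positive for all $n\ge 1$. Put $A=\beta_0\gamma_1-\beta_1\gamma_0$, $B=\gamma_0\alpha_1-\gamma_1\alpha_0$, $C=\alpha_0\beta_1-\alpha_1\beta_0$. Suppose $z_0z_2\le z_1^2$. Then $\{z_n\}_{n\ge 0}$ is log-concave if one of the following holds: (i) $B\le 0$ and $C\le 0$; (ii) $B<0$, $C>0$, $AC\le B^2$ and $z_0B+z_1C\le 0$; (iii) $B>0$, $C<0$, $AC\ge B^2$ and $z_0B+z_1C\le 0$.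
   Context: A sequence $a_0,a_1,\ldots$ of nonnegative real numbers is log-concave if $a_{k-1}a_{k+1}\le a_k^2$ for all $k\ge 1$. *)

From Stdlib Require Import Reals.
Open Scope R_scope.

Definition log_concave (a : nat -> R) : Prop :=
  (forall n, 0 <= a n) /\ (forall k, (1 <= k)%nat -> a (k - 1)%nat * a (k + 1)%nat <= a k ^ 2).

From Stdlib Require Import Reals Lra Lia Psatz.
Open Scope R_scope.

(* Write the recurrence as a_n z_{n+1} = b_n z_n - c_n z_{n-1}.  For linear
   coefficients the determinants a_n b_{n+1} - a_{n+1} b_n and
   a_n c_{n+1} - a_{n+1} c_n are the constants C and -B, and a_n A + b_n B + c_n C = 0.
   One proves by induction that z_{n-1} z_{n+1} <= z_n^2 together with the cross
   condition z_n C + z_{n-1} B <= 0.  Multiplying by a_n a_{n+1}, the next instance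
   of log-concavity reduces to the current one plus the cross condition; in each of
   the three cases the cross condition propagates by an elementary estimate. *)

Lemma log_concave_step (x y w v a b c a' b' c' B C : R) :
  0 <= x -> 0 < a -> 0 < a' -> 0 <= c ->
  a * w = b * x - c * y -> a' * v = b' * w - c' * x ->
  a * b' - a' * b = C -> a * c' - a' * c = - B ->
  y * w <= x ^ 2 -> w * C + x * B <= 0 ->
  x * v <= w ^ 2.
Proof.
  intros Hx Ha Ha' Hc Hw Hv HC HB Hyw Hcross.
  assert (Hid : a * a' * (x * v)
                = a' * (w * (a * w) + c * (y * w - x ^ 2)) + x * (w * C + x * B)).
  { replace B with (a' * c - a * c') by lra.
    rewrite Hw, <- HC.
    transitivity (a * x * (a' * v)); [ring|].
    rewrite Hv; ring. }
  apply (Rmult_le_reg_l (a * a')); [nra|].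
  rewrite Hid.
  assert (c * (y * w - x ^ 2) <= 0) by nra.
  assert (x * (w * C + x * B) <= 0) by nra.
  nra.
Qed.

Lemma cross_step_of_C_nonneg (x y w B C : R) :
  0 < y -> 0 <= x -> 0 <= C ->
  y * w <= x ^ 2 -> x * C + y * B <= 0 ->
  w * C + x * B <= 0.
Proof.
  intros Hy Hx HC Hyw Hcross.
  assert (y * (w * C + x * B) <= x * (x * C + y * B)) by nra.
  assert (x * (x * C + y * B) <= 0) by nra.
  nra.
Qed.

Lemma cross_step_of_B_pos (x y w a b c A B C : R) :
  0 < x -> 0 < a -> 0 < c -> 0 < B -> C <= 0 -> B ^ 2 <= A * C ->
  a * A + b * B + c * C = 0 -> a * w = b * x - c * y ->
  x * C + y * B <= 0 ->
  w * C + x * B <= 0.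
Proof.
  intros Hx Ha Hc HB HC HAC Hdet Hw Hcross.
  (* B a (w C + x B) = x (a B^2 + b B C) - c C (y B) <= x (a B^2 + b B C + c C^2) = x a (B^2 - A C) *)
  assert (Hid : B * (a * (w * C + x * B))
                = x * (a * B ^ 2 + b * B * C) - c * C * (y * B)).
  { rewrite Rmult_plus_distr_l, <- Rmult_assoc, Hw; ring. }
  assert (Hcy : - (c * C) * (y * B) <= - (c * C) * (- (x * C))).
  { apply Rmult_le_compat_l; nra. }
  assert (Hsum : a * B ^ 2 + b * B * C + c * C ^ 2 = a * (B ^ 2 - A * C)).
  { replace (a * (B ^ 2 - A * C)) with (a * B ^ 2 - C * (a * A)) by ring.
    replace (a * A) with (- (b * B) - c * C) by lra.
    ring. }
  assert (B * (a * (w * C + x * B)) <= 0).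
  { rewrite Hid.
    assert (x * (a * (B ^ 2 - A * C)) <= 0).
    { assert (0 < x * a) by nra. nra. }
    nra. }
  assert (0 < B * a) by nra.
  nra.
Qed.

Section ThreeTermRecurrence.

Variables (z a b c : nat -> R) (B C : R).

Hypothesis z_ge0 : forall n, 0 <= z n.
Hypothesis recurrence :
  forall n, a (S n) * z (S (S n)) = b (S n) * z (S n) - c (S n) * z n.
Hypothesis coeff_pos : forall n, 0 < a (S n) /\ 0 <= c (S n).
Hypothesis det_ab : forall n, a (S n) * b (S (S n)) - a (S (S n)) * b (S n) = C.
Hypothesis det_ac : forall n, a (S n) * c (S (S n)) - a (S (S n)) * c (S n) = - B.
Hypothesis cross_step : forall n,
  z n * z (S (S n)) <= z (S n) ^ 2 -> z (S n) * C + z n * B <= 0 ->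
  z (S (S n)) * C + z (S n) * B <= 0.
Hypothesis log_concave0 : z 0 * z 2 <= z 1 ^ 2.
Hypothesis cross0 : z 1 * C + z 0 * B <= 0.

Lemma log_concave_cross_invariant n :
  z n * z (S (S n)) <= z (S n) ^ 2 /\ z (S n) * C + z n * B <= 0.
Proof.
  induction n as [|n [IHlc IHcross]]; [split; assumption|].
  assert (Hcross : z (S (S n)) * C + z (S n) * B <= 0) by auto.
  split; [|exact Hcross].
  destruct (coeff_pos n) as [Ha Hc].
  destruct (coeff_pos (S n)) as [Ha' _].
  exact (log_concave_step _ _ _ _ _ _ _ _ _ _ B C (z_ge0 (S n)) Ha Ha' Hc
           (recurrence n) (recurrence (S n)) (det_ab n) (det_ac n) IHlc Hcross).
Qed.

Lemma log_concave_of_cross_invariant : log_concave z.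
Proof.
  split; [exact z_ge0|].
  intros [|k] Hk; [lia|].
  rewrite Nat.sub_succ, Nat.sub_0_r, Nat.add_1_r.
  apply log_concave_cross_invariant.
Qed.

End ThreeTermRecurrence.

Theorem theorem3p11 (z : nat -> R) (a1 a0 b1 b0 c1 c0 : R) :
  (forall n, 0 < z n) ->
  (forall n, (1 <= n)%nat ->
     (a1 * INR n + a0) * z (n + 1)%nat
     = (b1 * INR n + b0) * z n - (c1 * INR n + c0) * z (n - 1)%nat) ->
  (forall n, (1 <= n)%nat ->
     0 < a1 * INR n + a0 /\ 0 < b1 * INR n + b0 /\ 0 < c1 * INR n + c0) ->
  z 0%nat * z 2%nat <= z 1%nat ^ 2 ->
  let A := b0 * c1 - b1 * c0 in
  let B := c0 * a1 - c1 * a0 in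
  let C := a0 * b1 - a1 * b0 in
  (B <= 0 /\ C <= 0)
  \/ (B < 0 /\ 0 < C /\ A * C <= B ^ 2 /\ z 0%nat * B + z 1%nat * C <= 0)
  \/ (0 < B /\ C < 0 /\ A * C >= B ^ 2 /\ z 0%nat * B + z 1%nat * C <= 0) ->
  log_concave z.
Proof.
  intros Hz Hrec Hcoef H02 A B C Hcase.
  pose (a n := a1 * INR n + a0); pose (b n := b1 * INR n + b0);
    pose (c n := c1 * INR n + c0).
  assert (Hrec' : forall n, a (S n) * z (S (S n)) = b (S n) * z (S n) - c (S n) * z n).
  { intro n; specialize (Hrec (S n) ltac:(lia)).
    rewrite Nat.add_1_r, Nat.sub_succ, Nat.sub_0_r in Hrec; exact Hrec. }
  assert (Hpos : forall n, 0 < a (S n) /\ 0 < c (S n)).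
  { intro n; destruct (Hcoef (S n) ltac:(lia)) as (Ha & _ & Hc); split; assumption. }
  assert (Hcross : forall n,
    z n * z (S (S n)) <= z (S n) ^ 2 -> z (S n) * C + z n * B <= 0 ->
    z (S (S n)) * C + z (S n) * B <= 0).
  { intros n Hlc Hx; destruct (Hpos n) as [Ha Hc].
    pose proof (Hz n); pose proof (Hz (S n)); pose proof (Hz (S (S n))).
    destruct Hcase as [[HB HC] | [(HB & HC & _) | (HB & HC & HAC & _)]].
    - nra.
    -
      apply (cross_step_of_C_nonneg _ (z n)); auto; lra.
    - apply (cross_step_of_B_pos _ (z n) _ (a (S n)) (b (S n)) (c (S n)) A);
        auto; try lra; unfold a, b, c, A, B, C; ring. }
  apply (log_concave_of_cross_invariant z a b c B C).
  - intro n; left; apply Hz.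
  - exact Hrec'.
  - intro n; destruct (Hpos n); split; lra.
  - intro n; unfold a, b, C; rewrite (S_INR (S n)); ring.
  - intro n; unfold a, c, B; rewrite (S_INR (S n)); ring.
  - exact Hcross.
  - exact H02.
  - pose proof (Hz 0%nat); pose proof (Hz 1%nat).
    destruct Hcase as [[HB HC] | [(_ & _ & _ & Hinit) | (_ & _ & _ & Hinit)]]; nra.
Qed.
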